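(* Let $W$ be an $n\times n$ matrix with $\pm1$ entries. Assume that there exists a sequence $0\le j(1),\ldots,j(n)\le n$ such that $W_{ij}=-1$ if $j\le j(i)$ and $W_{ij}=1$ if $j>j(i)$. Then $W$ is $O(\log(n))$-decomposable.
   Context: For an $n\times m$ matrix $W$, $\mathrm{sym}(W)=\begin{bmatrix}0 & W\\ W^T & 0\end{bmatrix}$; $W$ is $\beta$-decomposable if there exist positive semi-definite matrices $P,N$ with $\mathrm{sym}(W)=P-N$ and $P_{ii},N_{ii}\le\beta$ for all $i$. This generalizes the known fact (Hazan, Kale, Shalev-Shwartz) that the $n\times n$ matrix with $1$ on and above the diagonal and $-1$ below it is $O(\log n)$-decomposable. *)

From HB Require Import structures.
From mathcomp Require Import all_boot all_order all_algebra.
From mathcomp Require Import all_classical all_reals exp.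
Set Implicit Arguments. Unset Strict Implicit. Unset Printing Implicit Defensive.
Import Order.TTheory GRing.Theory Num.Theory.
Local Open Scope ring_scope.

Definition psd (R : realType) (k : nat) (A : 'M[R]_k) : Prop :=
  A^T = A /\ forall x : 'cV[R]_k, 0 <= (x^T *m A *m x) 0 0.

Definition symmx (R : realType) (n m : nat) (W : 'M[R]_(n, m)) : 'M[R]_(n + m) :=
  block_mx 0 W W^T 0.

Definition decomposable (R : realType) (n m : nat) (W : 'M[R]_(n, m)) (beta : R) : Prop :=
  exists P N : 'M[R]_(n + m),
    [/\ psd P, psd N, symmx W = P - N &
        forall i, P i i <= beta /\ N i i <= beta].

From HB Require Import structures.
From mathcomp Require Import all_boot all_order all_algebra.
From mathcomp Require Import all_classical all_reals exp.
From mathcomp Require Import ring lra zify.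
Set Implicit Arguments. Unset Strict Implicit. Unset Printing Implicit Defensive.
Import Order.TTheory GRing.Theory Num.Theory.

(* Write t = jf i.  Then W = J - 2 M with J the all-ones matrix and M_ik = [k < t],
   and k < t holds iff there is exactly one dyadic level l at which the prefix
   t / 2^l is odd and k / 2^l = t / 2^l - 1.  Hence M is a sum, over the
   O(log n) levels l and the blocks b, of the rectangles
   {i : jf i / 2^l = 2b+1} x {k : k / 2^l = 2b}; at a fixed level every row and
   every column meets at most one rectangle.  A sum of outer products
   sum_s u_s v_s^T is beta-decomposable as soon as all the sums
   sum_s u_s(i)^2 / 2 and sum_s v_s(k)^2 / 2 are at most beta, so every level
   contributes O(1) to the bound. *)

Local Open Scope ring_scope.

Section Decomposition.
Variable R : realType.

Lemma psd_scale_gram (S : finType) k (x : S -> 'cV[R]_k) (c : R) : 0 <= c ->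
  psd (c *: \sum_s x s *m (x s)^T).
Proof.
move=> c_ge0; split.
  rewrite linearZ /= raddf_sum /=; congr (_ *: _); apply: eq_bigr => s _.
  by rewrite trmx_mul trmxK.
move=> z; rewrite -scalemxAr -scalemxAl mxE mulr_ge0 //.
rewrite mulmx_sumr mulmx_suml summxE sumr_ge0 // => s _.
have -> : z^T *m (x s *m (x s)^T) *m z = (z^T *m x s) *m (z^T *m x s)^T.
  by rewrite trmx_mul trmxK !mulmxA.
by rewrite mxE big_ord1 [_^T 0 0]mxE -expr2 sqr_ge0.
Qed.

Lemma psdD k (A B : 'M[R]_k) : psd A -> psd B -> psd (A + B).
Proof.
move=> [symA posA] [symB posB]; split; first by rewrite linearD /= symA symB.
by move=> z; rewrite mulmxDr mulmxDl mxE addr_ge0.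
Qed.

Lemma decomposableD n m (A B : 'M[R]_(n, m)) a b :
  decomposable A a -> decomposable B b -> decomposable (A + B) (a + b).
Proof.
move=> [P1 [N1 [psdP1 psdN1 defA diag1]]] [P2 [N2 [psdP2 psdN2 defB diag2]]].
exists (P1 + P2), (N1 + N2); split; try exact: psdD.
  by rewrite opprD addrACA -defA -defB /symmx add_block_mx !addr0 linearD.
move=> i; have [? ?] := diag1 i; have [? ?] := diag2 i.
by rewrite !mxE; split; apply: lerD.
Qed.

Lemma decomposable_le n m (A : 'M[R]_(n, m)) a b : a <= b ->
  decomposable A a -> decomposable A b.
Proof.
move=> le_ab [P [N [psdP psdN defA diagA]]]; exists P, N; split => // i.
by have [? ?] := diagA i; split; apply: le_trans le_ab.
Qed.

Lemma gram_entry (S : finType) k (x : S -> 'cV[R]_k) (c : R) i j :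
  (c *: \sum_s x s *m (x s)^T) i j = c * \sum_s x s i 0 * x s j 0.
Proof. by rewrite mxE summxE; under eq_bigr do rewrite mxE big_ord1 mxE. Qed.

(* P and N are half the Gram matrices of the stacked vectors (u; v) and (u; -v):
   the diagonal blocks of P - N cancel, the off-diagonal ones are sum_s u_s v_s^T. *)
Lemma decomposable_sum_outer (S : finType) n m
    (u : S -> 'cV[R]_n) (v : S -> 'cV[R]_m) beta :
  (forall i, 2^-1 * \sum_s (u s i 0) ^+ 2 <= beta) ->
  (forall j, 2^-1 * \sum_s (v s j 0) ^+ 2 <= beta) ->
  decomposable (\sum_s u s *m (v s)^T) beta.
Proof.
move=> bound_u bound_v.
pose x s := col_mx (u s) (v s); pose y s := col_mx (u s) (- v s).
exists (2^-1 *: \sum_s x s *m (x s)^T), (2^-1 *: \sum_s y s *m (y s)^T).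
split; try by apply: psd_scale_gram; rewrite invr_ge0 ler0n.
  apply/matrixP => i j; rewrite [RHS]mxE [X in _ = _ + X]mxE !gram_entry.
  rewrite -mulrBr -sumrB /x /y /symmx.
  have outerE s a b : (u s *m (v s)^T) a b = u s a 0 * v s b 0.
    by rewrite mxE big_ord1 mxE.
  case: (split_ordP i) => i' ->; case: (split_ordP j) => j' ->.
  - rewrite block_mxEul mxE big1 ?mulr0 // => s _.
    by rewrite !col_mxEu subrr.
  - rewrite block_mxEur summxE mulr_sumr; apply: eq_bigr => s _.
    by rewrite !col_mxEu !col_mxEd outerE mxE; field.
  - rewrite block_mxEdl mxE summxE mulr_sumr; apply: eq_bigr => s _.
    by rewrite !col_mxEu !col_mxEd outerE mxE; field.
  - rewrite block_mxEdr mxE big1 ?mulr0 // => s _.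
    by rewrite !col_mxEd !mxE mulrNN subrr.
move=> i; rewrite !gram_entry /x /y.
case: (split_ordP i) => i' ->.
  by split; under eq_bigr do rewrite col_mxEu -expr2; apply: bound_u.
by split; under eq_bigr do rewrite col_mxEd ?mxE ?mulrNN -expr2; apply: bound_v.
Qed.

Lemma decomposable_outer n m (u : 'cV[R]_n) (v : 'cV[R]_m) beta :
  (forall i, 2^-1 * (u i 0) ^+ 2 <= beta) ->
  (forall j, 2^-1 * (v j 0) ^+ 2 <= beta) ->
  decomposable (u *m v^T) beta.
Proof.
move=> bound_u bound_v.
have := @decomposable_sum_outer 'I_1 n m (fun=> u) (fun=> v) beta.
by rewrite big_ord1; apply=> i; rewrite big_ord1.
Qed.

End Decomposition.

Section Dyadic.
Local Open Scope nat_scope.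

Lemma sum_eq_inj_le1 N (g : nat -> nat) c : injective g ->
  \sum_(b < N) (c == g b) <= 1.
Proof.
move=> g_inj; case: (pickP (fun b : 'I_N => c == g b)) => [b0 /eqP c_gb0 | none].
  rewrite (bigD1 b0) //= c_gb0 eqxx big1 // => b nb0.
  by rewrite (inj_eq g_inj) eq_sym; move: nb0; rewrite -val_eqE => /negbTE ->.
by rewrite (@big1 _ 0 addn) // => b _; rewrite none.
Qed.

Lemma sum_pair_eq_inj_le K N (f g : nat -> nat) : injective g ->
  \sum_(s : 'I_K * 'I_N) (f s.1 == g s.2) <= K.
Proof.
move=> g_inj.
rewrite -(pair_bigA _ (fun (l : 'I_K) (b : 'I_N) => (f l == g b) : nat)) /=.
rewrite -[X in _ <= X]card_ord -sum1_card.
by apply: leq_sum => l _; apply: sum_eq_inj_le1.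
Qed.

Lemma sum_pick N c (X : bool) :
  \sum_(b < N) ((b == c :> nat) && X) = (c < N) && X.
Proof.
case: X; last by rewrite andbF big1 // => b _; rewrite andbF.
rewrite andbT; under eq_bigr do rewrite andbT.
elim: N => [|N IH]; first by rewrite big_ord0.
by rewrite big_ord_recr /= IH; case: ltngtP; case: ltngtP => //=; lia.
Qed.

Lemma sum_dyadic_block N c d : c./2 < N ->
  \sum_(b < N) ((c == b.*2.+1) && (d == b.*2)) = odd c && (d.+1 == c).
Proof.
move: (odd_double_half c) => <-; rewrite half_bit_double.
case: (odd c) => /= lt_hN; rewrite ?add1n ?add0n odd_double /=.
  under eq_bigr => b _ do rewrite eqSS (inj_eq double_inj) eq_sym.
  transitivity (\sum_(b < N) ((b == c./2 :> nat) && (d == c./2.*2))).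
    by apply: eq_bigr => b _; case: eqP => // ->.
  by rewrite sum_pick lt_hN eqSS.
rewrite (@big1 _ 0 addn) // => b _.
by case: eqP => // /(congr1 odd); rewrite /= !odd_double.
Qed.

Lemma ltn_halves k t : (k < t : nat) = (odd t && (k.+1 == t)) + (k./2 < t./2).
Proof.
move: (odd_double_half t) (odd_double_half k).
move: (odd t) (odd k) t./2 k./2 => ot ok ht hk <- <-.
by case: ot ok => -[]; rewrite /= -!muln2; try case: eqP; lia.
Qed.

Lemma sum_odd_prefix K t k : t < 2 ^ K ->
  \sum_(l < K) (odd (t %/ 2 ^ l) && ((k %/ 2 ^ l).+1 == t %/ 2 ^ l)) = (k < t).
Proof.
elim: K t k => [|K IH] t k lt_t.
  by move: lt_t; rewrite big_ord0 expn0 ltnS leqn0 => /eqP ->.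
rewrite big_ord_recl expn0 !divn1 ltn_halves.
under eq_bigr do rewrite /bump /= expnS !divnMA !divn2.
by rewrite IH //; move: lt_t; rewrite expnS -divn2; set q := 2 ^ K; lia.
Qed.

Lemma sum_dyadic_blocks K N t k : t < N -> t < 2 ^ K ->
  \sum_(l < K) \sum_(b < N) ((t %/ 2 ^ l == b.*2.+1) && (k %/ 2 ^ l == b.*2))
  = (k < t).
Proof.
move=> lt_tN lt_tK; rewrite -(sum_odd_prefix k lt_tK).
apply: eq_bigr => l _; apply: sum_dyadic_block.
rewrite -divn2; apply: leq_ltn_trans lt_tN.
exact: leq_trans (leq_div _ _) (leq_div _ _).
Qed.

End Dyadic.

Section StepMatrix.
Variables (R : realType) (n K : nat) (jf : 'I_n -> nat).
Hypotheses (jf_le : forall i, (jf i <= n)%N) (n_lt : (n < 2 ^ K)%N).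

Definition step_mx : 'M[R]_n := \matrix_(i, k) if (k < jf i)%N then -1 else 1.

Definition block_rows (s : 'I_K * 'I_n.+1) : 'cV[R]_n :=
  \col_i (jf i %/ 2 ^ s.1 == s.2.*2.+1)%N%:R.

Definition block_cols (s : 'I_K * 'I_n.+1) : 'cV[R]_n :=
  \col_k (-2 * (k %/ 2 ^ s.1 == s.2.*2)%N%:R).

Lemma step_mx_dyadic :
  step_mx = const_mx 1 *m (const_mx 1 : 'cV_n)^T
            + \sum_s block_rows s *m (block_cols s)^T.
Proof.
apply/matrixP => i k; rewrite !mxE summxE big_ord1 !mxE.
have entry s : (block_rows s *m (block_cols s)^T) i k =
    -2 * ((jf i %/ 2 ^ s.1 == s.2.*2.+1) && (k %/ 2 ^ s.1 == s.2.*2))%N%:R.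
  by rewrite !mxE big_ord1 !mxE mulrCA -natrM mulnb.
rewrite (eq_bigr _ (fun s _ => entry s)) -mulr_sumr -natr_sum.
rewrite -(pair_bigA _ (fun (l : 'I_K) (b : 'I_n.+1) =>
  ((jf i %/ 2 ^ l == b.*2.+1) && (k %/ 2 ^ l == b.*2))%N : nat)) /=.
rewrite sum_dyadic_blocks ?ltnS ?jf_le //; last exact: leq_ltn_trans (jf_le i) n_lt.
by case: ltnP => _ /=; rewrite ?mulr1 ?mulr0; lra.
Qed.

Lemma sqr_natr_bool (b : bool) : (b%:R : R) ^+ 2 = b%:R.
Proof. by case: b; rewrite ?expr1n ?expr0n. Qed.

Lemma step_mx_decomposable : decomposable step_mx (2^-1 + 2 * K%:R).
Proof.
have K_ge0 : 0 <= K%:R :> R by [].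
rewrite step_mx_dyadic; apply: decomposableD.
  by apply: decomposable_outer => i; rewrite mxE expr1n mulr1.
apply: decomposable_sum_outer => [i | k].
  under eq_bigr do rewrite mxE sqr_natr_bool.
  have := @sum_pair_eq_inj_le K n.+1 (fun l => jf i %/ 2 ^ l)%N (fun b => b.*2.+1)%N.
  have succ_double_inj : injective (fun b => b.*2.+1)%N.
    by move=> b c /eqP; rewrite eqSS (inj_eq double_inj) => /eqP.
  rewrite -(ler_nat R) natr_sum => /(_ succ_double_inj).
  lra.
under eq_bigr do rewrite mxE exprMn sqrrN sqr_natr_bool.
have := @sum_pair_eq_inj_le K n.+1 (fun l => k %/ 2 ^ l)%N double.
rewrite -(ler_nat R) natr_sum -mulr_sumr => /(_ double_inj).
lra.
Qed.

End StepMatrix.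

Lemma trunc_log2_bound (R : realType) (n : nat) : (2 <= n)%N ->
  2^-1 + 2 * (trunc_log 2 n).+1%:R <= 5 / ln (2 : R) * ln (n%:R : R).
Proof.
move=> n_ge2; set L := trunc_log 2 n.
have ln2_gt0 : 0 < ln (2 : R) by apply: ln_gt0; lra.
have n_gt0 : (0 < n%:R :> R) by rewrite ltr0n; lia.
have L_le : L%:R <= ln (n%:R : R) / ln 2.
  rewrite ler_pdivlMr // mulr_natl -lnXn; last lra.
  rewrite ler_ln ?posrE ?exprn_gt0 // -natrX ler_nat.
  by apply: trunc_logP => //; lia.
have one_le : 1 <= ln (n%:R : R) / ln 2.
  by rewrite ler_pdivlMr // mul1r ler_ln ?posrE ?ler_nat.
rewrite mulrAC -mulrA -[L.+1]addn1 natrD.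
move: L_le one_le; set z := _ / _ => L_le one_le; lra.
Qed.

Theorem proposition4 (R : realType) :
  exists C : R, 0 < C /\
  forall (n : nat) (W : 'M[R]_n), (2 <= n)%N ->
    (forall i k, W i k = 1 \/ W i k = -1) ->
    (exists jf : 'I_n -> nat,
        (forall i, (jf i <= n)%N) /\
        (forall i k : 'I_n, W i k = if (k.+1 <= jf i)%N then -1 else 1)) ->
    decomposable W (C * ln (n%:R)).
Proof.
exists (5 / ln 2); split.
  by apply: divr_gt0; [lra | apply: ln_gt0; lra].
(* The +-1 hypothesis is implied by the step shape of W. *)
move=> n W n_ge2 _ [jf [jf_le defW]].
have -> : W = step_mx R jf by apply/matrixP => i k; rewrite defW mxE.
apply: decomposable_le (trunc_log2_bound R n_ge2) _.
by apply: step_mx_decomposable => //; apply: trunc_log_ltn.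
Qed.
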